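(* Let $G$ be a compact Lie group with normalized Haar measure $dg$, and let $\sigma_1,\sigma_2,\alpha_1,\alpha_2,\rho$ be finite-dimensional unitary representations of $G$. Then the operator on $V_{\sigma_1}\otimes V_{\sigma_2}$ $$\Phi:=\int_{G\times G}\chi_{\alpha_1}(g)\,\chi_{\alpha_2}(h)\,\chi_{\rho}(g h^{-1})\,\sigma_1(g)\otimes\sigma_2(h)\,dg\,dh$$ is positive, i.e. $\langle v,\Phi v\rangle\geq0$ for all $v\in V_{\sigma_1}\otimes V_{\sigma_2}$.
   Context: $\chi_\rho(g)=\mathrm{tr}\,\rho(g)$ denotes the character of a finite-dimensional representation $\rho$. Representation spaces carry $G$-invariant scalar products making the representations unitary, and the tensor product carries the induced scalar product. An operator $A$ is positive if $\langle v,Av\rangle\ge 0$ for all $v$. *)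

From HB Require Import structures.
From mathcomp Require Import all_boot all_order all_algebra.
From mathcomp Require Import all_classical all_reals all_analysis.
From mathcomp Require Import complex mxtens.

Set Implicit Arguments.
Unset Strict Implicit.
Unset Printing Implicit Defensive.

Import Order.TTheory GRing.Theory Num.Theory.
Import numFieldNormedType.Exports.
Local Open Scope classical_set_scope.
Local Open Scope ring_scope.

Definition borel (G : ptopologicalType) := g_sigma_algebraType (@open G).

Definition is_compact_group (G : ptopologicalType)
    (mul : G -> G -> G) (inv : G -> G) (one : G) : Prop :=
  [/\ (forall x y z, mul x (mul y z) = mul (mul x y) z),
      (forall x, mul one x = x /\ mul x one = x) &
      (forall x, mul (inv x) x = one /\ mul x (inv x) = one)] /\
  [/\ continuous (fun p : G * G => mul p.1 p.2),
      continuous inv,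
      hausdorff_space G &
      compact [set: G] ].

Definition is_normalized_haar (R : realType) (G : ptopologicalType)
    (mul : G -> G -> G) (mu : {measure set (borel G) -> \bar R}) : Prop :=
  [/\ mu [set: borel G] = 1%E,
      (forall (g : G) (A : set (borel G)), measurable A ->
         mu [set mul g x | x in A] = mu A) &
      (forall (g : G) (A : set (borel G)), measurable A ->
         mu [set mul x g | x in A] = mu A) ].

Definition mxadj (R : rcfType) m n (A : 'M[R[i]]_(m, n)) : 'M[R[i]]_(n, m) :=
  (map_mx Num.conj A)^T.

(* A finite-dimensional continuous unitary representation of G on C^n
   (written in an orthonormal basis for the invariant scalar product). *)
Definition is_unitary_rep (R : realType) (G : ptopologicalType)
    (mul : G -> G -> G) (one : G) n (rho : G -> 'M[R[i]]_n) : Prop :=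
  [/\ rho one = 1%:M,
      (forall g h, rho (mul g h) = rho g *m rho h),
      (forall g, rho g *m mxadj (rho g) = 1%:M) &
      (forall i j, continuous (fun g : G => complex.Re (rho g i j)) /\
                   continuous (fun g : G => complex.Im (rho g i j))) ].

Definition character (R : rcfType) (G : Type) n (rho : G -> 'M[R[i]]_n)
  (g : G) : R[i] := \tr (rho g).

Definition cintegral (R : realType) (G : ptopologicalType)
    (mu : {measure set (borel G) -> \bar R}) (f : G -> R[i]) : R[i] :=
  Complex (Rintegral mu [set: borel G] (fun x => complex.Re (f x)))
          (Rintegral mu [set: borel G] (fun x => complex.Im (f x))).

Definition mx_integral (R : realType) (G : ptopologicalType)
    (mu : {measure set (borel G) -> \bar R}) m n (F : G -> 'M[R[i]]_(m, n))
  : 'M[R[i]]_(m, n) :=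
  \matrix_(i, j) cintegral mu (fun x => F x i j).

From HB Require Import structures.
From mathcomp Require Import all_boot all_order all_algebra.
From mathcomp Require Import all_classical all_reals all_analysis.
From mathcomp Require Import complex mxtens ring.

Set Implicit Arguments.
Unset Strict Implicit.
Unset Printing Implicit Defensive.

Import Order.TTheory GRing.Theory Num.Theory.
Import numFieldNormedType.Exports.
Local Open Scope classical_set_scope.
Local Open Scope ring_scope.

(* Since chi_rho (g h^-1) = sum_(b,c) rho(g)_bc conj(rho(h)_bc), every entry of the
   integrand is a sum of products of a matrix coefficient at g of the unitary
   representation T1 = alpha1 (x) rho (x) sigma1 with a matrix coefficient at h of
   T2 = alpha2 (x) conj(rho) (x) sigma2.  The double integral thus only involves the
   Haar averages P_i = int T_i(g) dg, and invariance of the Haar measure gives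
   P_i = T_i(g) P_i, hence P_i^* P_i = P_i.  So Phi is a sum of compressions of the
   Schur product of the positive matrices P1 and P2, and is positive. *)

Section SchurGram.
Variable C : numClosedFieldType.

Lemma schur_gram_form_ge0 (I1 I2 K : finType) (P1 : I1 -> I1 -> C) (P2 : I2 -> I2 -> C) :
  (forall x y, \sum_k Num.conj (P1 k x) * P1 k y = P1 x y) ->
  (forall x y, \sum_k Num.conj (P2 k x) * P2 k y = P2 x y) ->
  forall (phi1 : K -> I1) (phi2 : K -> I2) (w : K -> C),
  0 <= \sum_k \sum_l Num.conj (w k) * w l * P1 (phi1 k) (phi1 l) * P2 (phi2 k) (phi2 l).
Proof.
move=> gram1 gram2 phi1 phi2 w.
(* Substituting P_i = P_i^* P_i turns the form into sum_(s,t) |Z s t|^2. *)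
pose Z s t := \sum_l w l * P1 s (phi1 l) * P2 t (phi2 l).
suff -> : \sum_k \sum_l Num.conj (w k) * w l * P1 (phi1 k) (phi1 l) * P2 (phi2 k) (phi2 l)
          = \sum_s \sum_t Num.conj (Z s t) * Z s t.
  by apply: sumr_ge0 => s _; apply: sumr_ge0 => t _; rewrite mulrC mul_conjC_ge0.
transitivity (\sum_s \sum_t \sum_k \sum_l Num.conj (w k * P1 s (phi1 k) * P2 t (phi2 k))
                 * (w l * P1 s (phi1 l) * P2 t (phi2 l))); last first.
  apply: eq_bigr => s _; apply: eq_bigr => t _.
  rewrite /Z rmorph_sum mulr_suml; apply: eq_bigr => k _.
  by rewrite mulr_sumr.
symmetry; under eq_bigr do rewrite exchange_big /=.
rewrite exchange_big /=; apply: eq_bigr => k _.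
under eq_bigr do rewrite exchange_big /=.
rewrite exchange_big /=; apply: eq_bigr => l _.
symmetry; rewrite -(gram1 (phi1 k) (phi1 l)) -(gram2 (phi2 k) (phi2 l)).
rewrite mulr_sumr [RHS]exchange_big /=; apply: eq_bigr => t _.
rewrite mulr_sumr mulr_suml; apply: eq_bigr => s _.
rewrite !rmorphM /=; ring.
Qed.

End SchurGram.

Definition psdmx (R : rcfType) n (M : 'M[R[i]]_n) :=
  forall v : 'cV_n, 0 <= (mxadj v *m M *m v) ord0 ord0.

Section PositiveSemidefinite.
Variables (R : rcfType) (n : nat).

Lemma mx_qformE (M : 'M[R[i]]_n) (v : 'cV_n) :
  (mxadj v *m M *m v) ord0 ord0 = \sum_p \sum_q Num.conj (v p ord0) * v q ord0 * M p q.
Proof.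
rewrite mxE exchange_big /=; apply: eq_bigr => q _.
rewrite mxE mulr_suml; apply: eq_bigr => p _.
by rewrite !mxE; ring.
Qed.

Lemma psdmx_sum (I : finType) (F : I -> 'M[R[i]]_n) :
  (forall k, psdmx (F k)) -> psdmx (\sum_k F k).
Proof.
move=> psdF v; rewrite mulmx_sumr mulmx_suml summxE.
by apply: sumr_ge0 => k _; exact: psdF.
Qed.

Lemma psdmx_schur_gram (B I1 I2 : finType) (P1 : I1 -> I1 -> R[i]) (P2 : I2 -> I2 -> R[i]) :
  (forall x y, \sum_k Num.conj (P1 k x) * P1 k y = P1 x y) ->
  (forall x y, \sum_k Num.conj (P2 k x) * P2 k y = P2 x y) ->
  forall (f1 : B -> 'I_n -> I1) (f2 : B -> 'I_n -> I2),
  psdmx (\matrix_(p, q) \sum_(bc : B * B)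
           P1 (f1 bc.1 p) (f1 bc.2 q) * P2 (f2 bc.1 p) (f2 bc.2 q)).
Proof.
move=> gram1 gram2 f1 f2 v; rewrite mx_qformE.
pose F b p c q := Num.conj (v p ord0) * v q ord0 * P1 (f1 b p) (f1 c q) * P2 (f2 b p) (f2 c q).
have -> : \sum_p \sum_q Num.conj (v p ord0) * v q ord0 *
     (\matrix_(p, q) \sum_(bc : B * B) P1 (f1 bc.1 p) (f1 bc.2 q) * P2 (f2 bc.1 p) (f2 bc.2 q)) p q
   = \sum_(k : B * 'I_n) \sum_(l : B * 'I_n) F k.1 k.2 l.1 l.2.
  transitivity (\sum_b \sum_p \sum_c \sum_q F b p c q); last first.
    by rewrite pair_big; apply: eq_bigr => k _; rewrite pair_big.
  rewrite [RHS]exchange_big /=; apply: eq_bigr => p _.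
  under [RHS]eq_bigr do rewrite exchange_big /=.
  rewrite [RHS]exchange_big /=; apply: eq_bigr => q _.
  rewrite mxE mulr_sumr [RHS]pair_bigA /=; apply: eq_bigr => bc _.
  by rewrite /F !mulrA.
exact: (schur_gram_form_ge0 gram1 gram2 (fun k : B * 'I_n => f1 k.1 k.2)
  (fun k : B * 'I_n => f2 k.1 k.2) (fun k : B * 'I_n => v k.2 ord0)).
Qed.
End PositiveSemidefinite.

Section ComplexParts.
Variable R : rcfType.
Implicit Types x y : R[i].

Lemma ReD x y : complex.Re (x + y) = complex.Re x + complex.Re y.
Proof. by case: x; case: y. Qed.
Lemma ImD x y : complex.Im (x + y) = complex.Im x + complex.Im y.
Proof. by case: x; case: y. Qed.
Lemma ReM x y : complex.Re (x * y) = complex.Re x * complex.Re y - complex.Im x * complex.Im y.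
Proof. by case: x; case: y. Qed.
Lemma ImM x y : complex.Im (x * y) = complex.Re x * complex.Im y + complex.Im x * complex.Re y.
Proof. by case: x => a b; case: y => c d /=; rewrite addrC. Qed.
Lemma ReJ x : complex.Re (Num.conj x) = complex.Re x.
Proof. by case: x. Qed.
Lemma ImJ x : complex.Im (Num.conj x) = - complex.Im x.
Proof. by case: x. Qed.

End ComplexParts.

Definition ccontinuous (R : realType) (G : ptopologicalType) (f : G -> R[i]) :=
  continuous (fun x => complex.Re (f x)) /\ continuous (fun x => complex.Im (f x)).

Section ComplexContinuous.
Variables (R : realType) (G : ptopologicalType).
Implicit Types f g : G -> R[i].

Lemma ccontinuous_cst (c : R[i]) : ccontinuous (fun _ : G => c).
Proof. by split; apply: cst_continuous. Qed.

Lemma ccontinuousD f g : ccontinuous f -> ccontinuous g -> ccontinuous (fun x => f x + g x).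
Proof.
move=> [f1 f2] [g1 g2]; split.
- under eq_fun do rewrite ReD.
  by move=> x; exact: (@continuousD R R^o G _ _ x (f1 x) (g1 x)).
- under eq_fun do rewrite ImD.
  by move=> x; exact: (@continuousD R R^o G _ _ x (f2 x) (g2 x)).
Qed.

Lemma ccontinuousM f g : ccontinuous f -> ccontinuous g -> ccontinuous (fun x => f x * g x).
Proof.
move=> [f1 f2] [g1 g2]; split.
- under eq_fun do rewrite ReM.
  move=> x; apply: (@continuousB R R^o G _ _ x).
  + exact: (@continuousM R G _ _ x (f1 x) (g1 x)).
  + exact: (@continuousM R G _ _ x (f2 x) (g2 x)).
- under eq_fun do rewrite ImM.
  move=> x; apply: (@continuousD R R^o G _ _ x).
  + exact: (@continuousM R G _ _ x (f1 x) (g2 x)).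
  + exact: (@continuousM R G _ _ x (f2 x) (g1 x)).
Qed.

Lemma ccontinuous_conj f : ccontinuous f -> ccontinuous (fun x => Num.conj (f x)).
Proof.
move=> [f1 f2]; split; first by under eq_fun do rewrite ReJ.
under eq_fun do rewrite ImJ.
by move=> x; exact: (@continuousN R R^o G _ x (f2 x)).
Qed.

Lemma ccontinuous_sum (I : Type) (s : seq I) (P : pred I) (F : I -> G -> R[i]) :
  (forall k, ccontinuous (F k)) -> ccontinuous (fun x => \sum_(k <- s | P k) F k x).
Proof.
move=> contF; elim: s => [|k s IH].
  by under eq_fun do rewrite big_nil; exact: ccontinuous_cst.
under eq_fun do rewrite big_cons.
by case: (P k) => //; exact: ccontinuousD.
Qed.

End ComplexContinuous.

Definition coef_tens (G I J : Type) (C : pzRingType)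
    (T : G -> I -> I -> C) (U : G -> J -> J -> C) (g : G) (x y : I * J) : C :=
  T g x.1 y.1 * U g x.2 y.2.

Section HaarIntegral.
Variables (R : realType) (G : ptopologicalType) (mu : {measure set (borel G) -> \bar R}).
Hypotheses (mu_setT : mu [set: borel G] = 1%E) (G_compact : compact [set: G]).
Implicit Type f : G -> R[i].

Lemma borel_continuous_measurable (f : G -> R) :
  continuous f -> measurable_fun [set: borel G] f.
Proof.
move=> cf; apply: (measurability _ (measurable_realfun.RGenOpens.measurableE R)).
move=> _ [_ [a [b ->] <-]]; apply: sub_sigma_algebra; rewrite setTI.
by apply: (proj1 (continuousP f) cf); exact: interval_open.
Qed.

Lemma borel_continuous_integrable (f : G -> R) :
  continuous f -> mu.-integrable [set: borel G] (EFin \o f).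
Proof.
move=> cf; apply: measurable_bounded_integrable => //.
- by rewrite mu_setT ltry.
- exact: borel_continuous_measurable.
have f_bounded : \forall M \near +oo, globally (range f) [set x : R | `|x| <= M].
  apply: (@compact_bounded R R^o); apply: continuous_compact => //.
  exact: continuous_subspaceT.
rewrite /bounded_near; near=> M => x _.
by apply: (near f_bounded M).
Unshelve. all: by end_near.
Qed.

Lemma cintegralD f1 f2 : ccontinuous f1 -> ccontinuous f2 ->
  cintegral mu (fun x => f1 x + f2 x) = cintegral mu f1 + cintegral mu f2.
Proof.
move=> [Re1 Im1] [Re2 Im2]; rewrite /cintegral.
under eq_Rintegral do rewrite ReD.
under [X in Complex _ X]eq_Rintegral do rewrite ImD.
by rewrite !RintegralD //; apply: borel_continuous_integrable.
Qed.

Lemma cintegral_cst (c : R[i]) : cintegral mu (fun _ => c) = c.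
Proof. by rewrite /cintegral !Rintegral_cst // mu_setT /= !mulr1; case: c. Qed.

Lemma cintegralMl (c : R[i]) f : ccontinuous f ->
  cintegral mu (fun x => c * f x) = c * cintegral mu f.
Proof.
move=> [f1 f2]; rewrite /cintegral.
under eq_Rintegral do rewrite ReM.
under [X in Complex _ X]eq_Rintegral do rewrite ImM.
have cM (a : R) (h : G -> R) : continuous h -> continuous (fun x => a * h x).
  by move=> ch x; apply: (@continuousM R G _ _ x); [exact: cst_continuous|exact: ch].
have iRe := borel_continuous_integrable f1; have iIm := borel_continuous_integrable f2.
rewrite RintegralB ?RintegralD ?RintegralZl //;
  try by apply: borel_continuous_integrable; apply: cM.
by case: c => a b; congr Complex; rewrite /= addrC.
Qed.

Lemma cintegralMr (c : R[i]) f : ccontinuous f ->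
  cintegral mu (fun x => f x * c) = cintegral mu f * c.
Proof. by move=> cf; rewrite mulrC -cintegralMl //; under eq_fun do rewrite mulrC. Qed.

Lemma cintegral_conj f : ccontinuous f ->
  cintegral mu (fun x => Num.conj (f x)) = Num.conj (cintegral mu f).
Proof.
move=> [f1 f2]; rewrite /cintegral.
under eq_Rintegral do rewrite ReJ.
under [X in Complex _ X]eq_Rintegral do rewrite ImJ -mulN1r.
by rewrite RintegralZl //= ?mulN1r //; apply: borel_continuous_integrable.
Qed.

Lemma cintegral_sum (I : Type) (s : seq I) (P : pred I) (F : I -> G -> R[i]) :
  (forall k, ccontinuous (F k)) ->
  cintegral mu (fun x => \sum_(k <- s | P k) F k x) = \sum_(k <- s | P k) cintegral mu (F k).
Proof.
move=> contF; elim: s => [|k s IH].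
  by under eq_fun do rewrite big_nil; rewrite big_nil cintegral_cst.
under eq_fun do rewrite big_cons; rewrite big_cons.
by case: (P k); rewrite -IH // cintegralD //; exact: ccontinuous_sum.
Qed.

Lemma cintegral2_sum_mul (I : finType) (A B : I -> G -> R[i]) :
  (forall k, ccontinuous (A k)) -> (forall k, ccontinuous (B k)) ->
  cintegral mu (fun x => cintegral mu (fun y => \sum_k A k x * B k y))
  = \sum_k cintegral mu (A k) * cintegral mu (B k).
Proof.
move=> contA contB.
transitivity (cintegral mu (fun x => \sum_k A k x * cintegral mu (B k))).
  congr cintegral; apply/funext => x; rewrite cintegral_sum => [|k].
    by apply: eq_bigr => k _; exact: cintegralMl.
  apply: ccontinuousM; [exact: ccontinuous_cst | exact: contB].
rewrite cintegral_sum => [|k].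
  by apply: eq_bigr => k _; exact: cintegralMr.
by apply: ccontinuousM; [exact: contA | exact: ccontinuous_cst].
Qed.

Variables (mul : G -> G -> G) (inv : G -> G) (one : G).
Hypotheses (mulA : forall x y z, mul x (mul y z) = mul (mul x y) z)
  (mul1g : forall x, mul one x = x)
  (mulVg : forall x, mul (inv x) x = one) (mulgV : forall x, mul x (inv x) = one)
  (mul_continuous : continuous (fun p : G * G => mul p.1 p.2))
  (mu_lmul : forall (g : G) (A : set (borel G)), measurable A ->
     mu [set mul g x | x in A] = mu A).

Lemma lmul_continuous g : continuous (mul g).
Proof.
move=> x; apply: (@continuous_comp _ _ _ (fun x => (g, x)) (fun p : G * G => mul p.1 p.2)).
  by apply: cvg_pair => /=; [exact: cvg_cst|exact: cvg_id].
exact: mul_continuous.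
Qed.

Lemma lmul_measurable g : measurable_fun [set: borel G] (fun x : borel G => (mul g x : borel G)).
Proof.
apply: (@measurability _ _ (borel G) (borel G) _ _ (@open G)) => //.
move=> _ [B oB <-]; apply: sub_sigma_algebra; rewrite setTI.
exact: (proj1 (continuousP _) (@lmul_continuous g)).
Qed.

Lemma Rintegral_lmul (f : G -> R) g : continuous f ->
  Rintegral mu [set: borel G] (fun x => f (mul g x)) = Rintegral mu [set: borel G] f.
Proof.
move=> cf; rewrite /Rintegral; congr fine.
pose lmul_g := fun x : borel G => (mul g x : borel G).
have -> : (\int[mu]_(x in [set: borel G]) (f (mul g x))%:E
           = \int[pushforward mu lmul_g]_(x in [set: borel G]) (f x)%:E)%E.
  rewrite (integral_pushforward (lmul_measurable g)) ?preimage_setT //.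
  - by apply/measurable_realfun.measurable_EFinP; exact: borel_continuous_measurable.
  - apply: (@borel_continuous_integrable (fun x => f (mul g x))).
    by move=> x; apply: continuous_comp; [exact: lmul_continuous|exact: cf].
apply: (eq_measure_integral mu); first exact: lmul_measurable.
move=> mf A mA _; rewrite /pushforward /= /pushforward.
rewrite (_ : _ @^-1` A = [set mul (inv g) x | x in A]); first exact: mu_lmul.
apply/seteqP; split => x /=.
  by move=> Ax; exists (mul g x) => //; rewrite mulA mulVg mul1g.
by move=> [y Ay <-]; rewrite /lmul_g mulA mulgV mul1g.
Qed.

Lemma cintegral_lmul f g : ccontinuous f -> cintegral mu (fun x => f (mul g x)) = cintegral mu f.
Proof. by move=> [f1 f2]; rewrite /cintegral (Rintegral_lmul g f1) (Rintegral_lmul g f2). Qed.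

Definition unitary_coefs (I : finType) (T : G -> I -> I -> R[i]) :=
  [/\ forall g h x y, T (mul g h) x y = \sum_z T g x z * T h z y,
      forall g x y, \sum_z Num.conj (T g z x) * T g z y = (x == y)%:R &
      forall x y, ccontinuous (fun g => T g x y)].

Lemma unitary_coefs_mx n (rho : G -> 'M[R[i]]_n) :
  is_unitary_rep mul one rho -> unitary_coefs (fun g x y => rho g x y).
Proof.
case=> _ rhoM rhoU rhoC; split.
- by move=> g h x y; rewrite rhoM mxE.
- move=> g x y; have /matrixP/(_ x y) := mulmx1C (rhoU g).
  by rewrite !mxE => <-; apply: eq_bigr => z _; rewrite !mxE.
- by move=> x y; exact: rhoC.
Qed.

Lemma unitary_coefs_conj (I : finType) (T : G -> I -> I -> R[i]) :
  unitary_coefs T -> unitary_coefs (fun g x y => Num.conj (T g x y)).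
Proof.
case=> TM TU TC; split.
- by move=> g h x y; rewrite TM rmorph_sum; apply: eq_bigr => z _; rewrite rmorphM.
- move=> g x y; transitivity (Num.conj (\sum_z Num.conj (T g z x) * T g z y)).
    by rewrite rmorph_sum; apply: eq_bigr => z _; rewrite rmorphM.
  by rewrite TU; case: (x == y); rewrite ?rmorph1 ?rmorph0.
- by move=> x y; exact: ccontinuous_conj.
Qed.

Lemma unitary_coefs_tens (I J : finType) (T : G -> I -> I -> R[i]) (U : G -> J -> J -> R[i]) :
  unitary_coefs T -> unitary_coefs U -> unitary_coefs (coef_tens T U).
Proof.
case=> TM TU TC [UM UU UC]; split.
- move=> g h x y; rewrite /coef_tens TM UM mulr_suml.
  under eq_bigr do rewrite mulr_sumr.
  by rewrite pair_big; apply: eq_bigr => -[z w] _ /=; rewrite mulrACA.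
- move=> g [x1 x2] [y1 y2]; rewrite /coef_tens /=.
  rewrite xpair_eqE -[RHS]/((x1 == y1) && (x2 == y2))%:R -mulnb natrM -(TU g x1 y1) -(UU g x2 y2).
  rewrite mulr_suml; under [RHS]eq_bigr do rewrite mulr_sumr.
  by rewrite [RHS]pair_big; apply: eq_bigr => -[z w] _ /=; rewrite rmorphM mulrACA.
- by move=> x y; exact: ccontinuousM.
Qed.

Lemma unitary_rep_inv n (rho : G -> 'M[R[i]]_n) :
  is_unitary_rep mul one rho -> forall g, rho (inv g) = mxadj (rho g).
Proof.
case=> rho1 rhoM rhoU _ g.
have rhoV : rho g *m rho (inv g) = 1%:M by rewrite -rhoM mulgV rho1.
by rewrite -[rho (inv g)]mul1mx -(mulmx1C (rhoU g)) -mulmxA rhoV mulmx1.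
Qed.

Definition haar_avg (I : finType) (T : G -> I -> I -> R[i]) x y :=
  cintegral mu (fun g => T g x y).

Section HaarAverage.
Variables (I : finType) (T : G -> I -> I -> R[i]).
Hypothesis unitT : unitary_coefs T.

Lemma haar_avg_lmul g x y : \sum_z T g x z * haar_avg T z y = haar_avg T x y.
Proof.
case: unitT => TM _ TC; rewrite /haar_avg.
under eq_bigr do rewrite -cintegralMl //.
rewrite -cintegral_sum => [|z]; last by apply: ccontinuousM; [exact: ccontinuous_cst|].
rewrite -[RHS](cintegral_lmul g) //.
by congr cintegral; apply/funext => h; rewrite TM.
Qed.

Lemma haar_avg_gram x y :
  \sum_k Num.conj (haar_avg T k x) * haar_avg T k y = haar_avg T x y.
Proof.
case: unitT => _ TU TC.
have avgE k : Num.conj (haar_avg T k x) * haar_avg T k y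
    = cintegral mu (fun g => Num.conj (T g k x) * haar_avg T k y).
  by rewrite cintegralMr ?cintegral_conj //; exact: ccontinuous_conj.
under eq_bigr do rewrite avgE.
rewrite -cintegral_sum => [|k]; last first.
  by apply: ccontinuousM; [exact: ccontinuous_conj | exact: ccontinuous_cst].
(* P^* P = int T(g)^* P dg = int T(g)^* T(g) P dg = int P dg *)
rewrite -[RHS]cintegral_cst; congr cintegral; apply/funext => g.
under eq_bigr do rewrite -(haar_avg_lmul g) mulr_sumr.
rewrite exchange_big /=.
transitivity (\sum_z (\sum_k Num.conj (T g k x) * T g k z) * haar_avg T z y).
  by apply: eq_bigr => z _; rewrite mulr_suml; apply: eq_bigr => k _; rewrite mulrA.
under eq_bigr do rewrite TU.
rewrite (bigD1 x) //= eqxx mul1r big1 ?addr0 // => z zx.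
by rewrite eq_sym (negbTE zx) mul0r.
Qed.

End HaarAverage.

Section CharacterIntegral.
Variables (n1 n2 a1 a2 r : nat)
  (sigma1 : G -> 'M[R[i]]_n1) (sigma2 : G -> 'M[R[i]]_n2)
  (alpha1 : G -> 'M[R[i]]_a1) (alpha2 : G -> 'M[R[i]]_a2) (rho : G -> 'M[R[i]]_r).
Hypotheses (unit_sigma1 : is_unitary_rep mul one sigma1)
  (unit_sigma2 : is_unitary_rep mul one sigma2)
  (unit_alpha1 : is_unitary_rep mul one alpha1)
  (unit_alpha2 : is_unitary_rep mul one alpha2)
  (unit_rho : is_unitary_rep mul one rho).

Let T1 := coef_tens (coef_tens (fun g x y => alpha1 g x y) (fun g x y => rho g x y))
                    (fun g x y => sigma1 g x y).
Let T2 := coef_tens (coef_tens (fun g x y => alpha2 g x y) (fun g x y => Num.conj (rho g x y)))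
                    (fun g x y => sigma2 g x y).

Let unitary_T1 : unitary_coefs T1.
Proof.
by apply: unitary_coefs_tens; [apply: unitary_coefs_tens|]; exact: unitary_coefs_mx.
Qed.

Let unitary_T2 : unitary_coefs T2.
Proof.
apply: unitary_coefs_tens; [apply: unitary_coefs_tens; [|apply: unitary_coefs_conj]|];
  exact: unitary_coefs_mx.
Qed.

Let ind1 (a : 'I_a1 * 'I_a2) (b : 'I_r) (p : 'I_(n1 * n2)) := ((a.1, b), (mxtens_unindex p).1).
Let ind2 (a : 'I_a1 * 'I_a2) (b : 'I_r) (p : 'I_(n1 * n2)) := ((a.2, b), (mxtens_unindex p).2).

Lemma character_integrand_expand g h p q :
  ((character alpha1 g * character alpha2 h * character rho (mul g (inv h)))
     *: (sigma1 g *t sigma2 h)) p q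
  = \sum_(k : ('I_a1 * 'I_a2) * ('I_r * 'I_r))
      T1 g (ind1 k.1 k.2.1 p) (ind1 k.1 k.2.2 q) * T2 h (ind2 k.1 k.2.1 p) (ind2 k.1 k.2.2 q).
Proof.
have chiE : character alpha1 g * character alpha2 h
    = \sum_(aa : 'I_a1 * 'I_a2) alpha1 g aa.1 aa.1 * alpha2 h aa.2 aa.2.
  by rewrite /character /mxtrace big_distrlr pair_bigA.
have chi_rhoE : character rho (mul g (inv h))
    = \sum_b \sum_c rho g b c * Num.conj (rho h b c).
  case: (unit_rho) => _ rhoM _ _.
  rewrite /character /mxtrace rhoM (unitary_rep_inv unit_rho).
  by apply: eq_bigr => b _; rewrite mxE; apply: eq_bigr => c _; rewrite !mxE.
rewrite !mxE chiE chi_rhoE pair_bigA big_distrlr pair_bigA mulr_suml.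
by apply: eq_bigr => k _; rewrite /T1 /T2 /ind1 /ind2 /coef_tens /=; ring.
Qed.

Lemma character_mx_integral_psd :
  psdmx (mx_integral mu (fun g => mx_integral mu (fun h =>
    (character alpha1 g * character alpha2 h * character rho (mul g (inv h)))
      *: (sigma1 g *t sigma2 h)))).
Proof.
pose N a := \matrix_(p, q) \sum_(bc : 'I_r * 'I_r)
  haar_avg T1 (ind1 a bc.1 p) (ind1 a bc.2 q) * haar_avg T2 (ind2 a bc.1 p) (ind2 a bc.2 q).
suff -> : mx_integral mu (fun g => mx_integral mu (fun h =>
    (character alpha1 g * character alpha2 h * character rho (mul g (inv h)))
      *: (sigma1 g *t sigma2 h))) = \sum_a N a.
  apply: psdmx_sum => a; apply: psdmx_schur_gram; exact: haar_avg_gram.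
apply/matrixP => p q; rewrite summxE mxE.
under eq_fun do rewrite mxE.
under eq_fun do under eq_fun do rewrite character_integrand_expand.
rewrite cintegral2_sum_mul => [|k|k].
- by under [RHS]eq_bigr do rewrite mxE; rewrite [RHS]pair_bigA.
- by case: unitary_T1.
- by case: unitary_T2.
Qed.

End CharacterIntegral.

End HaarIntegral.

Theorem lemma1 (R : realType) (G : ptopologicalType)
    (mul : G -> G -> G) (inv : G -> G) (one : G)
    (mu : {measure set (borel G) -> \bar R})
    (n1 n2 a1 a2 r : nat)
    (sigma1 : G -> 'M[R[i]]_n1) (sigma2 : G -> 'M[R[i]]_n2)
    (alpha1 : G -> 'M[R[i]]_a1) (alpha2 : G -> 'M[R[i]]_a2)
    (rho : G -> 'M[R[i]]_r) :
  is_compact_group mul inv one ->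
  is_normalized_haar mul mu ->
  is_unitary_rep mul one sigma1 -> is_unitary_rep mul one sigma2 ->
  is_unitary_rep mul one alpha1 -> is_unitary_rep mul one alpha2 ->
  is_unitary_rep mul one rho ->
  let Phi : 'M[R[i]]_(n1 * n2) :=
    mx_integral mu (fun g => mx_integral mu (fun h =>
      (character alpha1 g * character alpha2 h * character rho (mul g (inv h)))
        *: (sigma1 g *t sigma2 h))) in
  forall v : 'cV[R[i]]_(n1 * n2), 0 <= (mxadj v *m Phi *m v) ord0 ord0.
Proof.
move=> [[mulA mul1 mulV] [mul_continuous _ _ G_compact]] [mu_setT mu_lmul _].
move=> unit_sigma1 unit_sigma2 unit_alpha1 unit_alpha2 unit_rho Phi.
have mul1g x : mul one x = x by case: (mul1 x).
have mulVg x : mul (inv x) x = one by case: (mulV x).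
have mulgV x : mul x (inv x) = one by case: (mulV x).
by apply: character_mx_integral_psd.
Qed.
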